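(* Let $\mathcal{V}$ be a finite set of nodes, $\mathcal{F}$ a finite set of flows, each flow $f$ with rate $\lambda_f>0$ and path node set $\mathcal{V}_f\subseteq\mathcal{V}$, each node $v$ with capacity $c_v>0$, and assume $\max_f\lambda_f\le\min_v c_v$. Fix $\mathcal{U}\subseteq\mathcal{V}$ and let $OPT(Q2,\mathcal{U})$ be the optimal value of the relaxed allocation problem Q2 for $\mathcal{U}$ (defined in the context). Let $\pi_{\mathrm{MCA}}^{\mathcal{U}}$ be the total rate of the flows fully assigned to the nodes of $\mathcal{U}$ by the MCA algorithm (defined in the context). Then $\pi_{\mathrm{MCA}}^{\mathcal{U}}\ge\frac12\,OPT(Q2,\mathcal{U})$.
   Context: Problem Q2 for $\mathcal{U}$: maximize $\sum_{f\in\mathcal{F}}\sum_{v\in\mathcal{V}_f\cap\mathcal{U}}\lambda_f^v$ over nonnegative $(\lambda_f^v)$ subject to $\sum_{f}\lambda_f^v\le c_v$ for $v\in\mathcal{U}$, $\lambda_f^v=0$ for $v\notin\mathcal{U}$, and $\sum_{v\in\mathcal{U}}\lambda_f^v\le\lambda_f$ for all $f$. Write $\mathcal{U}_f=\mathcal{V}_f\cap\mathcal{U}$ and $\mathcal{F}_{\mathcal{U}}=\{f:\mathcal{U}_f\ne\emptyset\}$. A flow is fully assigned if parts of it summing to $\lambda_f$ are assigned to nodes of $\mathcal{U}_f$, without exceeding node capacities. MCA algorithm. Phase I: compute an optimal basic (extreme-point) solution $\boldsymbol{\lambda}_{\mathcal{U}}$ of Q2 and set $y_f^v=\lambda_f^v/\lambda_f$.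 Assign (fully, temporarily) each flow $f$ with $y_f^v=1$ to node $v$. Build the bipartite graph $G'$ having an edge $(f,v)$ of weight $y_f^v$ for each pair with $0<y_f^v<1$ (it is a forest). While $G'$ is nonempty: Step 1: while some node $v$ of $G'$ has exactly one incident edge $(f,v)$, let $r'_v$ be the total rate of flows currently fully assigned to $v$; if $r'_v\ge\lambda_f^v$ set $y_f^v=0$ and delete $v$ from $G'$; otherwise unassign the flows currently fully assigned to $v$, assign $f$ entirely to $v$ ($y_f^v=1$, cancelling all other fractions of $f$), and delete $v$, $f$ and their incident edges. Step 2: pick a node $v_1$ of $G'$ of degree at least two, two distinct incident edges of $v_1$, and the longest paths $p_1,p_2$ in $G'$ starting at $v_1$ through these edges; perturb the edge weights along $p_1$ and $p_2$ so that the rate changes $\lambda_f\Delta y_f^v$ on successive edges are $+\delta,-\delta,+\delta,\dots$ along $p_1$ and $-\delta,+\delta,-\delta,\dots$ along $p_2$ (starting at $v_1$), which preserves node loads, flow totals at interior vertices and the total assigned traffic; increase $\delta$ until some weight becomes $0$ or $1$, remove edges with weight $0$, and fully assign $f$ to $v$ when $y_f^v=1$; then return to Step 1. Phase II: for each flow of $\mathcal{F}_{\mathcal{U}}$ not yet assigned, if the total remaining capacity of the nodes in $\mathcal{U}_f$ is at least $\lambda_f$, split $f$ and fully assign it to a subset of $\mathcal{U}_f$ using remaining capacities. *)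

From mathcomp Require Import all_boot all_order all_algebra.
Set Implicit Arguments. Unset Strict Implicit. Unset Printing Implicit Defensive.
Import Order.TTheory GRing.Theory Num.Theory.
Local Open Scope ring_scope.

Section MCA.
Variables (R : realFieldType) (F V : finType).
Variables (lam : F -> R) (c : V -> R) (Vf : F -> {set V}) (U : {set V}).

Definition Uf (f : F) : {set V} := Vf f :&: U.

(* x f v stands for lambda_f^v; variables only exist for v in V_f *)
Definition Q2_feasible (x : F -> V -> R) : Prop :=
  [/\ forall f v, 0 <= x f v,
      forall v, v \in U -> \sum_f x f v <= c v,
      forall f v, v \notin U -> x f v = 0,
      forall f v, v \notin Vf f -> x f v = 0 &
      forall f, \sum_(v in U) x f v <= lam f].

Definition Q2_obj (x : F -> V -> R) : R := \sum_f \sum_(v in Uf f) x f v.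

Definition Q2_OPT (opt : R) : Prop :=
  (exists2 x, Q2_feasible x & Q2_obj x = opt) /\
  (forall x, Q2_feasible x -> Q2_obj x <= opt).

Definition Q2_optimal (x : F -> V -> R) : Prop :=
  Q2_feasible x /\ forall x', Q2_feasible x' -> Q2_obj x' <= Q2_obj x.

(* basic = extreme point of the feasible polytope *)
Definition Q2_basic (x : F -> V -> R) : Prop :=
  Q2_feasible x /\
  forall (y z : F -> V -> R) (t : R), Q2_feasible y -> Q2_feasible z ->
    0 < t < 1 -> (forall f v, x f v = t * y f v + (1 - t) * z f v) ->
    forall f v, y f v = z f v.

(* state: the weights y f v; f is fully assigned to v iff y f v = 1;
   the edges of G' are the pairs with 0 < y f v < 1 *)
Definition frac_edge (y : F -> V -> R) (f : F) (v : V) : bool :=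
  (0 < y f v) && (y f v < 1).

Definition node_deg (y : F -> V -> R) (v : V) : nat :=
  #|[set f | frac_edge y f v]|.

Definition assigned_load (y : F -> V -> R) (v : V) : R :=
  \sum_(g | y g v == 1) lam g.

Definition adj (y : F -> V -> R) (a b : F + V) : bool :=
  match a, b with
  | inl f, inr v => frac_edge y f v
  | inr v, inl f => frac_edge y f v
  | _, _ => false
  end.

Definition gpath (y : F -> V -> R) (v1 : V) (p : seq (F + V)) : bool :=
  path (adj y) (inr v1) p && uniq (inr v1 :: p).

Definition longest_from (y : F -> V -> R) (v1 : V) (f1 : F) (p : seq (F + V)) : Prop :=
  [/\ gpath y v1 p, head (inr v1) p = inl f1 &
      forall q, gpath y v1 q -> head (inr v1) q = inl f1 -> (size q <= size p)%N].

Definition on_edge (f : F) (v : V) (a b : F + V) : bool :=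
  ((a == inl f) && (b == inr v)) || ((a == inr v) && (b == inl f)).

Definition psign (x0 : F + V) (xs : seq (F + V)) (f : F) (v : V) : R :=
  \sum_(k < size xs)
    (-1) ^+ k * (on_edge f v (nth x0 (x0 :: xs) k) (nth x0 (x0 :: xs) k.+1))%:R.

Definition step1_drop (y : F -> V -> R) (f : F) (v : V) : F -> V -> R :=
  fun g w => if (g == f) && (w == v) then 0 else y g w.

Definition step1_swap (y : F -> V -> R) (f : F) (v : V) : F -> V -> R :=
  fun g w => if g == f then (if w == v then 1 else 0)
             else if (w == v) && (y g v == 1) then 0 else y g w.

(* Step 2: rate change +d,-d,... along p1 and -d,+d,... along p2 *)
Definition perturb (y : F -> V -> R) (v1 : V) (p1 p2 : seq (F + V)) (d : R)
  : F -> V -> R :=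
  fun f v => y f v + d / lam f * (psign (inr v1) p1 f v - psign (inr v1) p2 f v).

Inductive phase1_step (y : F -> V -> R) : (F -> V -> R) -> Prop :=
| P1_leaf_drop f v :
    node_deg y v = 1%N -> frac_edge y f v ->
    lam f * y f v <= assigned_load y v ->
    phase1_step y (step1_drop y f v)
| P1_leaf_swap f v :
    node_deg y v = 1%N -> frac_edge y f v ->
    assigned_load y v < lam f * y f v ->
    phase1_step y (step1_swap y f v)
| P1_perturb v1 f1 f2 p1 p2 d :
    (forall v, node_deg y v <> 1%N) ->
    f1 != f2 -> longest_from y v1 f1 p1 -> longest_from y v1 f2 p2 ->
    0 < d ->
    (forall f v, 0 <= perturb y v1 p1 p2 d f v <= 1) ->
    (exists f v, psign (inr v1) p1 f v != psign (inr v1) p2 f v /\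
       (perturb y v1 p1 p2 d f v = 0 \/ perturb y v1 p1 p2 d f v = 1)) ->
    phase1_step y (perturb y v1 p1 p2 d).

Inductive phase1_reach : (F -> V -> R) -> (F -> V -> R) -> Prop :=
| P1_refl y : phase1_reach y y
| P1_trans y1 y2 y3 : phase1_step y1 y2 -> phase1_reach y2 y3 -> phase1_reach y1 y3.

(* z g w : rate of flow g assigned to node w *)
Definition rem_cap (z : F -> V -> R) (v : V) : R := c v - \sum_g z g v.

Definition valid_split (z : F -> V -> R) (f : F) (zf : V -> R) : Prop :=
  [/\ forall v, 0 <= zf v,
      forall v, v \notin Uf f -> zf v = 0,
      forall v, v \in Uf f -> zf v <= rem_cap z v &
      \sum_v zf v = lam f].

Definition upd (z : F -> V -> R) (f : F) (zf : V -> R) : F -> V -> R :=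
  fun g w => if g == f then zf w else z g w.

(* processing the flows of s in order; gain = total rate assigned in Phase II *)
Fixpoint phase2 (s : seq F) (z : F -> V -> R) (gain : R) : Prop :=
  match s with
  | [::] => gain = 0
  | f :: s' =>
      if lam f <= \sum_(v in Uf f) rem_cap z v then
        exists2 zf, valid_split z f zf & phase2 s' (upd z f zf) (gain - lam f)
      else phase2 s' z gain
  end.

Definition MCA_run (pi : R) : Prop :=
  exists (x0 y : F -> V -> R) (s : seq F) (gain : R),
    [/\ Q2_optimal x0, Q2_basic x0,
        phase1_reach (fun f v => x0 f v / lam f) y &
        (forall f v, ~~ frac_edge y f v)] /\
    [/\ uniq s,
        (forall f, (f \in s) = (~~ [exists v, y f v == 1]) && (Uf f != set0)),
        phase2 s (fun f v => if y f v == 1 then lam f else 0) gain &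
        pi = \sum_(f | [exists v, y f v == 1]) lam f + gain].

End MCA.

From mathcomp Require Import all_boot all_order all_algebra.
From mathcomp Require Import ring lra.
Set Implicit Arguments. Unset Strict Implicit. Unset Printing Implicit Defensive.
Import Order.TTheory GRing.Theory Num.Theory.
Local Open Scope ring_scope.

(* Phase I never decreases the potential "total traffic of the weights y plus
   the load of the closed nodes", a closed node being one without fractional
   edge.  A Step 1 leaf move closes its node, whose load pays for the fraction
   it drops or for the flows it unassigns; a Step 2 move shifts rate along two
   paths that end at leaf flows, so it keeps the traffic and only removes
   fractional edges.  The potential starts at least at the traffic of the
   optimal basic solution, which is OPT(Q2, U), and ends, when every node is
   closed, at twice the traffic of the integral weights, which is at most the
   rate of the fully assigned flows.  Phase II only adds rate.
   That longest paths end at leaf flows needs the fractional graph to be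
   acyclic: a cycle would carry a balanced direction along which the basic
   solution could be moved both ways, so it would not be extreme. *)

Section Sums.
Variable R : realFieldType.

Lemma ler_psum_sub (I : finType) (P Q : pred I) (g : I -> R) :
  (forall i, P i -> Q i) -> (forall i, Q i -> 0 <= g i) ->
  \sum_(i | P i) g i <= \sum_(i | Q i) g i.
Proof.
move=> PQ g_ge0; rewrite [leRHS](bigID P) /=.
have -> : \sum_(i | Q i && P i) g i = \sum_(i | P i) g i.
  by apply: eq_bigl => i; case Pi: (P i); rewrite ?andbT ?andbF ?PQ.
by rewrite lerDl sumr_ge0 // => i /andP [/g_ge0].
Qed.

Lemma sum_eq_indicator (I : finType) (i0 : I) : \sum_i ((i0 == i)%:R : R) = 1.
Proof. by rewrite (bigD1 i0) //= eqxx big1 ?addr0 // => i; rewrite eq_sym => /negPf ->. Qed.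

Lemma exists_pos_scale (I : finType) (a b : I -> R) :
  (forall i, a i != 0 -> 0 < b i) ->
  exists2 e, 0 < e & forall i, a i != 0 -> e * `|a i| <= b i.
Proof.
move=> b_gt0; pose S := \sum_(i | a i != 0) `|a i| / b i.
have S_ge0 : 0 <= S by apply: sumr_ge0 => i /b_gt0 bi; rewrite divr_ge0 // ltW.
exists (1 + S)^-1 => [|i ai]; first by rewrite invr_gt0 ltr_wpDr.
have bi := b_gt0 i ai.
have : `|a i| / b i <= S.
  rewrite /S (bigD1 i) //= lerDl.
  by apply: sumr_ge0 => j /andP [/b_gt0 bj _]; rewrite divr_ge0 // ltW.
rewrite ler_pdivrMr // => le_aS.
rewrite mulrC ler_pdivrMr ?ltr_wpDr //; nra.
Qed.

End Sums.

Section PathSigns.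
Variables (R : realFieldType) (F V : finType).
Implicit Types (y : F -> V -> R) (a b x : F + V) (f g : F) (v w : V).

Definition is_flow a : bool := if a is inl _ then true else false.
Definition cross a b : bool := is_flow a != is_flow b.

Lemma adj_cross y a b : adj y a b -> cross a b.
Proof. by case: a b => [?|?] [?|?]. Qed.

Lemma adj_irr y a : adj y a a = false.
Proof. by case: a. Qed.

Lemma is_flow_last x p : path cross x p -> is_flow (last x p) = is_flow x (+) odd (size p).
Proof.
elim: p x => [|z p IH] x /=; first by rewrite addbF.
case/andP=> xz /IH ->; move: xz; rewrite /cross.
by case: (is_flow x); case: (is_flow z); case: (odd _).
Qed.

Lemma on_edgeE f v g w :
  on_edge f v (inl g) (inr w) = (g == f) && (w == v) /\
  on_edge f v (inr w) (inl g) = (g == f) && (w == v).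
Proof. by rewrite /on_edge !eqE /= orbF andbC. Qed.

Lemma psign_nil x f v : psign R x [::] f v = 0.
Proof. by rewrite /psign big_ord0. Qed.

Lemma psign_cons x z zs f v :
  psign R x (z :: zs) f v = (on_edge f v x z)%:R - psign R z zs f v.
Proof.
rewrite /psign big_ord_recl /= expr0 mul1r -sumrN; congr (_ + _).
apply: eq_bigr => i _; rewrite /bump /= add1n exprS mulN1r mulNr.
have i_lt := ltn_ord i.
by rewrite [nth x (z :: zs) i](set_nth_default z) 1?(set_nth_default z x) //= ltnS ltnW.
Qed.

Lemma sum_on_edge_flow a b f : cross a b ->
  \sum_v ((on_edge f v a b)%:R : R) = (a == inl f)%:R + (b == inl f)%:R.
Proof.
case: a b => [g|w] [g'|w'] //= _.
- under eq_bigr => v _ do rewrite (on_edgeE f v g w').1.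
  by rewrite -sum_eqE /= addr0; case: (g == f); rewrite ?sum_eq_indicator ?big1.
- under eq_bigr => v _ do rewrite (on_edgeE f v g' w).2.
  by rewrite -sum_eqE /= add0r; case: (g' == f); rewrite ?sum_eq_indicator ?big1.
Qed.

Lemma sum_on_edge_node a b v : cross a b ->
  \sum_f ((on_edge f v a b)%:R : R) = (a == inr v)%:R + (b == inr v)%:R.
Proof.
case: a b => [g|w] [g'|w'] //= _.
- under eq_bigr => f _ do rewrite (on_edgeE f v g w').1 andbC.
  by rewrite -sum_eqE /= add0r; case: (w' == v); rewrite ?sum_eq_indicator ?big1.
- under eq_bigr => f _ do rewrite (on_edgeE f v g' w).2 andbC.
  by rewrite -sum_eqE /= addr0; case: (w == v); rewrite ?sum_eq_indicator ?big1.
Qed.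

Lemma sum_psign_flow x xs f : path cross x xs ->
  \sum_v psign R x xs f v = (x == inl f)%:R - (-1) ^+ size xs * (last x xs == inl f)%:R.
Proof.
elim: xs x => [|z zs IH] x /=.
  by rewrite big1 ?expr0 ?mul1r ?subrr // => v _; rewrite psign_nil.
case/andP=> xz zs_path; under eq_bigr do rewrite psign_cons.
by rewrite sumrB sum_on_edge_flow // IH // exprS; ring.
Qed.

Lemma sum_psign_node x xs v : path cross x xs ->
  \sum_f psign R x xs f v = (x == inr v)%:R - (-1) ^+ size xs * (last x xs == inr v)%:R.
Proof.
elim: xs x => [|z zs IH] x /=.
  by rewrite big1 ?expr0 ?mul1r ?subrr // => f _; rewrite psign_nil.
case/andP=> xz zs_path; under eq_bigr do rewrite psign_cons.
by rewrite sumrB sum_on_edge_node // IH // exprS; ring.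
Qed.

Lemma psign_frac_edge y x xs f v :
  path (adj y) x xs -> psign R x xs f v != 0 -> frac_edge y f v.
Proof.
elim: xs x => [|z zs IH] x /=; first by rewrite psign_nil eqxx.
case/andP=> xz zs_path; rewrite psign_cons.
case e: (on_edge f v x z); last by rewrite sub0r oppr_eq0; apply: IH.
move=> _ {IH zs_path}; move: e xz; case: x => [g|w]; case: z => [g'|w'] //=;
  by rewrite ?(on_edgeE f v g w').1 ?(on_edgeE f v g' w).2 => /andP [/eqP -> /eqP ->].
Qed.

Lemma psign_eq0 x xs f v :
  path (fun a b => ~~ on_edge f v a b) x xs -> psign R x xs f v = 0.
Proof.
elim: xs x => [|z zs IH] x /=; first by rewrite psign_nil.
by case/andP=> /negPf xz /IH; rewrite psign_cons xz => ->; rewrite subrr.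
Qed.

End PathSigns.

Section BasicSolutions.
Variables (R : realFieldType) (F V : finType).
Implicit Types (y : F -> V -> R) (a b u : F + V) (f g : F) (v w : V).

Definition frac_acyclic y : Prop := forall a q,
  path (adj y) a q -> uniq (a :: q) -> (1 < size q)%N -> ~~ adj y (last a q) a.

Lemma adj_sub y y' :
  (forall f v, frac_edge y' f v -> frac_edge y f v) -> subrel (adj y') (adj y).
Proof. by move=> fsub [g|w] [g'|w'] //= /fsub. Qed.

Lemma frac_acyclic_sub y y' : (forall f v, frac_edge y' f v -> frac_edge y f v) ->
  frac_acyclic y -> frac_acyclic y'.
Proof.
move=> fsub acyc a q /(sub_path (adj_sub fsub)) pq uq sq.
exact: contra (@adj_sub _ _ fsub _ _) (acyc a q pq uq sq).
Qed.

Lemma cross_on_edge a b : cross a b -> exists f v, on_edge f v a b.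
Proof.
case: a b => [g|w] [g'|w'] //= _.
- by exists g, w'; rewrite (on_edgeE g w' g w').1 !eqxx.
- by exists g', w; rewrite (on_edgeE g' w g' w).2 !eqxx.
Qed.

Lemma on_edge_incident f v a b u u' :
  on_edge f v a b -> on_edge f v u u' -> (u == a) || (u' == a).
Proof.
rewrite /on_edge => /orP [] /andP [/eqP ea /eqP eb] /orP [] /andP [/eqP eu /eqP eu'];
  by subst; rewrite eqxx ?orbT.
Qed.

Lemma on_edge_into f v a b u : on_edge f v a b -> on_edge f v u a -> u = b.
Proof.
by rewrite /on_edge => /orP [] /andP [/eqP ea /eqP eb] /orP [] /andP [/eqP eu /eqP eu'];
  subst.
Qed.

Lemma psign_cycle_first_edge y a b mid f v :
  path (adj y) b mid -> uniq (a :: b :: mid) -> mid != [::] -> on_edge f v a b ->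
  psign R a (b :: rcons mid a) f v = 1.
Proof.
move=> pmid /= /andP [a_bmid /andP [b_mid _]] mid0 e.
rewrite psign_cons e psign_eq0 ?subr0 // rcons_path; apply/andP; split.
  apply: (sub_in_path (P := predC1 a)) pmid => [u u' /= ua u'a _|].
    by apply/negP => /(on_edge_incident e); rewrite (negbTE ua) (negbTE u'a).
  by apply/allP => u u_in /=; apply: contraNneq a_bmid => <-.
apply/negP => /(on_edge_into e) last_b; move: b_mid; rewrite -last_b.
by case: mid mid0 {pmid a_bmid last_b} => //= m ms _; rewrite mem_last.
Qed.

Variables (lam : F -> R) (c : V -> R) (Vf : F -> {set V}) (U : {set V}).

Lemma Q2_feasible_add (x E : F -> V -> R) : Q2_feasible lam c Vf U x ->
  (forall f, \sum_v E f v = 0) -> (forall v, \sum_f E f v = 0) ->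
  (forall f v, `|E f v| <= x f v) -> Q2_feasible lam c Vf U (fun f v => x f v + E f v).
Proof.
case=> x_ge0 x_cap x_U x_Vf x_lam row col E_le.
have E0 f v : x f v = 0 -> E f v = 0.
  by move=> x0; have := E_le f v; rewrite x0 normr_le0 => /eqP.
split=> [f v|v vU|f v vU|f v vVf|f]; rewrite ?big_split /=.
- by have := E_le f v; have := ler_norm (- E f v); rewrite normrN; lra.
- by rewrite col addr0; apply: x_cap.
- by rewrite x_U // E0 ?x_U // addr0.
- by rewrite x_Vf // E0 ?x_Vf // addr0.
have -> : \sum_(v in U) E f v = \sum_v E f v.
  by rewrite big_mkcond; apply: eq_bigr => v _; case: ifPn => // /x_U /E0 ->.
by rewrite row addr0.
Qed.

Lemma Q2_basic_balanced_eq0 (x D : F -> V -> R) : Q2_basic lam c Vf U x ->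
  (forall f, \sum_v D f v = 0) -> (forall v, \sum_f D f v = 0) ->
  (forall f v, D f v != 0 -> 0 < x f v) -> forall f v, D f v = 0.
Proof.
case=> x_feas x_ext row col supp f v.
have [e e_gt0 e_le] := exists_pos_scale (fun i : F * V => supp i.1 i.2).
have shift k : `|k| = e -> Q2_feasible lam c Vf U (fun f v => x f v + k * D f v).
  move=> k_e; apply: Q2_feasible_add => // [g|w|g w].
  - by rewrite -mulr_sumr row mulr0.
  - by rewrite -mulr_sumr col mulr0.
  have [->|Dgw] := eqVneq (D g w) 0; first by rewrite mulr0 normr0; case: x_feas.
  by rewrite normrM k_e (e_le (g, w)).
have half : 0 < (2^-1 : R) < 1 by lra.
have mid g w : x g w = 2^-1 * (x g w + e * D g w) + (1 - 2^-1) * (x g w + - e * D g w).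
  by field.
have e_norm : `|- e| = e by rewrite normrN gtr0_norm.
have := x_ext _ _ _ (shift e (gtr0_norm e_gt0)) (shift (- e) e_norm) half mid f v.
nra.
Qed.

Lemma Q2_basic_frac_acyclic x : (forall f, 0 < lam f) -> Q2_basic lam c Vf U x ->
  frac_acyclic (fun f v => x f v / lam f).
Proof.
move=> lam_gt0 basic a [|b mid] //= /andP [ab pmid] uq.
rewrite ltnS lt0n size_eq0 => mid0; apply/negP => back.
set xs := b :: rcons mid a.
have pxs : path (adj (fun f v => x f v / lam f)) a xs by rewrite /= ab rcons_path pmid.
have cxs : path (@cross F V) a xs := sub_path (@adj_cross _ _ _ _) pxs.
have last_xs : last a xs = a by rewrite /= last_rcons.
have even : ~~ odd (size xs).
  by have := is_flow_last cxs; rewrite last_xs; case: (is_flow a); case: (odd _).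
pose D f v := psign R a xs f v.
have row f : \sum_v D f v = 0.
  by rewrite sum_psign_flow // last_xs -signr_odd (negbTE even) mul1r subrr.
have col v : \sum_f D f v = 0.
  by rewrite sum_psign_node // last_xs -signr_odd (negbTE even) mul1r subrr.
have supp f v : D f v != 0 -> 0 < x f v.
  by move=> /(psign_frac_edge pxs) /andP []; rewrite pmulr_lgt0 // invr_gt0.
have [f0 [v0 e0]] := cross_on_edge (adj_cross ab).
have := Q2_basic_balanced_eq0 basic row col supp f0 v0.
by rewrite /D (psign_cycle_first_edge pmid uq mid0 e0) => /eqP; rewrite oner_eq0.
Qed.

End BasicSolutions.

Section LongestPaths.
Variables (R : realFieldType) (F V : finType).
Implicit Types (y : F -> V -> R) (f g : F) (v w : V).

Lemma longest_path_last_adj y v1 p l u : frac_acyclic y -> gpath y v1 (rcons p l) ->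
  (forall q, gpath y v1 q -> head (inr v1) q = head (inr v1) (rcons p l) ->
     (size q <= size (rcons p l))%N) ->
  adj y l u -> u = last (inr v1) p.
Proof.
move=> acyc /andP [pp up] longest lu.
have [u_in|u_out] := boolP (u \in inr v1 :: p).
  have [pre [post def_p]] : exists pre post, inr v1 :: p = pre ++ u :: post.
    by case/splitPr: u_in => pre post; exists pre, post.
  have -> : last (inr v1) p = last u post.
    by have := congr1 (last (inr v1)) def_p; rewrite last_cat.
  case: post def_p => [//|b mid] def_p; exfalso.
  have def_pl : inr v1 :: rcons p l = pre ++ u :: rcons (b :: mid) l.
    by rewrite -rcons_cons def_p rcons_cat.
  move: pp up; rewrite -/(sorted _ (_ :: _)) def_pl sorted_cat_cons cat_uniq.
  case/andP=> _ cycle_path /and3P [_ _ cycle_uniq].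
  by move: (acyc u _ cycle_path cycle_uniq); rewrite size_rcons last_rcons lu => /(_ isT).
have ul : u != l by apply: contraTneq lu => ->; rewrite adj_irr.
suff: (size (rcons (rcons p l) u) <= size (rcons p l))%N by rewrite size_rcons ltnn.
apply: longest; last by case: (p).
rewrite /gpath rcons_path pp last_rcons lu -rcons_cons rcons_uniq up andbT /=.
by rewrite -rcons_cons mem_rcons in_cons negb_or ul u_out.
Qed.

Lemma longest_from_leaf_flow y v1 f1 p : frac_acyclic y ->
  (forall v, node_deg y v <> 1%N) -> longest_from y v1 f1 p ->
  exists fe w, [/\ last (inr v1) p = inl fe, frac_edge y fe w &
    forall w', frac_edge y fe w' -> w' = w].
Proof.
move=> acyc deg_ne1 [gp head_p longest]; case/lastP: p gp head_p longest => [//|p l] gp.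
move=> head_p longest; rewrite last_rcons.
have last_adj := longest_path_last_adj acyc gp (fun q gq hq => longest q gq (etrans hq head_p)).
have prev_l : adj y (last (inr v1) p) l by case/andP: gp; rewrite rcons_path => /andP [].
case: l prev_l last_adj {gp head_p longest} => [fe|w] prev_l last_adj.
  case: (last (inr v1) p) prev_l last_adj => [//|w] fe_w last_adj.
  by exists fe, w; split=> // w' /(last_adj (inr w')) [].
case: (last (inr v1) p) prev_l last_adj => [g|//] g_w last_adj; exfalso; apply: (deg_ne1 w).
apply/eqP/cards1P; exists g; apply/setP => h; rewrite !inE.
by apply/idP/eqP => [/(last_adj (inl h)) [] | ->].
Qed.

End LongestPaths.

Section Potential.
Variables (R : realFieldType) (F V : finType) (lam : F -> R).
Hypothesis lam_gt0 : forall f, 0 < lam f.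
Implicit Types (y : F -> V -> R) (f g : F) (v w : V).

Definition closed_node y v := [forall f, ~~ frac_edge y f v].
Definition node_load y v := \sum_f lam f * y f v.
Definition traffic y := \sum_f lam f * \sum_v y f v.
Definition closed_load y := \sum_(v | closed_node y v) node_load y v.
Definition potential y := traffic y + closed_load y.

Definition phase1_inv (y0 y : F -> V -> R) :=
  [/\ forall f v, 0 <= y f v <= 1, forall f, \sum_v y f v <= 1
    & forall f v, frac_edge y f v -> frac_edge y0 f v].

Lemma node_deg1_uniq y v f g :
  node_deg y v = 1%N -> frac_edge y f v -> frac_edge y g v -> g = f.
Proof.
move/eqP/cards1P=> [h deg_h] fv gv.
have: g \in [set f | frac_edge y f v] by rewrite inE.
have: f \in [set f | frac_edge y f v] by rewrite inE.
by rewrite deg_h !inE => /eqP -> /eqP.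
Qed.

Lemma not_frac_edge01 y f v :
  0 <= y f v <= 1 -> ~~ frac_edge y f v -> y f v = 0 \/ y f v = 1.
Proof.
case/andP=> y_ge0 y_le1; rewrite /frac_edge negb_and -!leNgt => /orP [] ?.
  by left; apply/eqP; rewrite eq_le; apply/andP.
by right; apply/eqP; rewrite eq_le; apply/andP.
Qed.

Lemma frac_row_rest_eq0 y f v w : (forall u, 0 <= y f u <= 1) -> \sum_u y f u <= 1 ->
  0 < y f v -> w != v -> ~~ frac_edge y f w -> y f w = 0.
Proof.
move=> bnd row yv wv /(not_frac_edge01 (bnd w)) [//|yw].
have: y f v + y f w <= \sum_u y f u.
  rewrite (bigD1 v) //= (bigD1 w) //= addrA lerDl.
  by apply: sumr_ge0 => u _; case/andP: (bnd u).
lra.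
Qed.

Lemma node_deg1_other01 y v f g : (forall g, 0 <= y g v <= 1) ->
  node_deg y v = 1%N -> frac_edge y f v -> g != f -> y g v = 0 \/ y g v = 1.
Proof.
move=> bnd deg fv gf; apply: not_frac_edge01 => //.
by apply: contra gf => /(node_deg1_uniq deg fv) ->.
Qed.

Lemma node_load_ge0 y v : (forall f, 0 <= y f v) -> 0 <= node_load y v.
Proof. by move=> y_ge0; apply: sumr_ge0 => f _; rewrite mulr_ge0 // ltW. Qed.

Lemma traffic_node_load y : traffic y = \sum_v node_load y v.
Proof.
by rewrite /node_load exchange_big; apply: eq_bigr => f _; rewrite mulr_sumr.
Qed.

Lemma closed_node_sub y y' v : (forall f w, frac_edge y' f w -> frac_edge y f w) ->
  closed_node y v -> closed_node y' v.
Proof.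
by move=> fsub /forallP y_closed; apply/forallP => f; exact: contraNN (@fsub f v) (y_closed f).
Qed.

Lemma closed_node_leaf y y' v f : (forall g w, frac_edge y' g w -> frac_edge y g w) ->
  node_deg y v = 1%N -> frac_edge y f v -> ~~ frac_edge y' f v -> closed_node y' v.
Proof.
move=> fsub deg fv f'v; apply/forallP => g; apply: contraNN f'v => g'v.
by rewrite -(node_deg1_uniq deg fv (fsub _ _ g'v)).
Qed.

Section ClosedLoad.
Variables (y y' : F -> V -> R).
Hypotheses (fsub : forall f v, frac_edge y' f v -> frac_edge y f v)
  (closed_eq : forall f v, closed_node y v -> y' f v = y f v)
  (y'_ge0 : forall f v, 0 <= y' f v).

Let closed_load_eq : closed_load y = \sum_(v | closed_node y v) node_load y' v.
Proof. by apply: eq_bigr => v cv; apply: eq_bigr => f _; rewrite closed_eq. Qed.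

Lemma closed_load_mono : closed_load y <= closed_load y'.
Proof.
rewrite closed_load_eq; apply: ler_psum_sub => v; first exact: closed_node_sub.
by move=> _; apply: node_load_ge0.
Qed.

Lemma closed_load_close v0 : ~~ closed_node y v0 -> closed_node y' v0 ->
  closed_load y + node_load y' v0 <= closed_load y'.
Proof.
move=> open0 closed0; rewrite [leRHS](bigD1 v0) //= addrC lerD2r closed_load_eq.
apply: ler_psum_sub => v; last by move=> _; apply: node_load_ge0.
by move=> cv; rewrite (closed_node_sub fsub cv); apply: contraTneq cv => ->.
Qed.

End ClosedLoad.

Lemma traffic_le_potential y : (forall f v, 0 <= y f v) -> traffic y <= potential y.
Proof. by move=> y_ge0; rewrite /potential lerDl sumr_ge0 // => v _; apply: node_load_ge0. Qed.

Lemma potential_no_frac y : (forall f v, ~~ frac_edge y f v) ->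
  potential y = traffic y + traffic y.
Proof.
move=> nofrac; rewrite /potential /closed_load traffic_node_load.
by congr (_ + _); apply: eq_bigl => v; apply/forallP.
Qed.

Lemma traffic_le_assigned y : (forall f v, 0 <= y f v <= 1) ->
  (forall f, \sum_v y f v <= 1) -> (forall f v, ~~ frac_edge y f v) ->
  traffic y <= \sum_(f | [exists v, y f v == 1]) lam f.
Proof.
move=> bnd row nofrac; rewrite /traffic [leRHS]big_mkcond; apply: ler_sum => f _.
case: ifPn => [_|/existsPn none1]; first by have := row f; have := lam_gt0 f; nra.
rewrite big1 ?mulr0 // => v _.
by case: (not_frac_edge01 (bnd f v) (nofrac f v)) => // y1; move: (none1 v); rewrite y1 eqxx.
Qed.

End Potential.

Section Phase1Steps.
Variables (R : realFieldType) (F V : finType) (lam : F -> R).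
Hypothesis lam_gt0 : forall f, 0 < lam f.
Implicit Types (y : F -> V -> R) (f g : F) (v w : V).

Lemma traffic_step1_drop y f0 v0 :
  traffic lam y = traffic lam (step1_drop y f0 v0) + lam f0 * y f0 v0.
Proof.
set y' := step1_drop y f0 v0; rewrite /traffic (bigD1 f0) //= [in RHS](bigD1 f0) //=.
have -> : \sum_(g | g != f0) lam g * \sum_w y' g w = \sum_(g | g != f0) lam g * \sum_w y g w.
  apply: eq_bigr => g /negPf gf0; congr (_ * _).
  by apply: eq_bigr => w _; rewrite /y' /step1_drop gf0.
have -> : \sum_w y f0 w = \sum_w y' f0 w + y f0 v0.
  rewrite (bigD1 v0) //= [in RHS](bigD1 v0) //= /y' /step1_drop !eqxx add0r addrC.
  by congr (_ + _); apply: eq_bigr => w /negPf wv0; rewrite wv0 andbF.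
ring.
Qed.

Lemma row_step1_swap y f0 v0 : \sum_w step1_swap y f0 v0 f0 w = 1.
Proof.
rewrite -(sum_eq_indicator R v0); apply: eq_bigr => w _.
by rewrite /step1_swap eqxx eq_sym; case: (v0 == w).
Qed.

Lemma traffic_step1_swap y f0 v0 : (forall f v, 0 <= y f v <= 1) -> \sum_v y f0 v <= 1 ->
  traffic lam y <= traffic lam (step1_swap y f0 v0) + assigned_load lam y v0.
Proof.
move=> bnd row0; set y' := step1_swap y f0 v0.
rewrite /traffic /assigned_load [X in _ + X]big_mkcond -big_split /=.
apply: ler_sum => g _; case: (eqVneq g f0) => [->|gf0].
  rewrite row_step1_swap.
  by have := lam_gt0 f0; case: ifP => _; nra.
have -> : \sum_w y g w = \sum_w y' g w + (y g v0 == 1)%:R.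
  rewrite (bigD1 v0) //= [in RHS](bigD1 v0) //= /y' /step1_swap (negbTE gf0) eqxx /=.
  under [in RHS]eq_bigr => w /negPf -> do rewrite andFb.
  by case: eqP => [->|_]; rewrite ?add0r ?addr0 // addrC.
by case: ifP => _; rewrite mulrDr ?mulr1 ?mulr0 ?addr0.
Qed.

Lemma step1_drop_progress y0 y f0 v0 : phase1_inv y0 y -> node_deg y v0 = 1%N ->
  frac_edge y f0 v0 -> lam f0 * y f0 v0 <= assigned_load lam y v0 ->
  phase1_inv y0 (step1_drop y f0 v0) /\
  potential lam y <= potential lam (step1_drop y f0 v0).
Proof.
case=> bnd row fsub0 deg f0v0 le_assigned; set y' := step1_drop y f0 v0.
have y'E g w : y' g w = if (g == f0) && (w == v0) then 0 else y g w by [].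
have bnd' g w : 0 <= y' g w <= 1 by rewrite y'E; case: ifP; rewrite ?lexx ?ler01.
have y'_ge0 g w : 0 <= y' g w by case/andP: (bnd' g w).
have fsub g w : frac_edge y' g w -> frac_edge y g w.
  by rewrite /frac_edge y'E; case: ifP; rewrite ?ltxx.
split.
  split=> // [g|g w /fsub /fsub0 //]; apply: le_trans (row g); apply: ler_sum => w _.
  by rewrite y'E; case: ifP => _; [case/andP: (bnd g w)|].
have closed_eq g w : closed_node y w -> y' g w = y g w.
  move=> cw; rewrite y'E; case: (w =P v0) cw => [->|_]; rewrite ?andbF //.
  by move=> /forallP/(_ f0); rewrite f0v0.
have load0 : node_load lam y' v0 = assigned_load lam y v0.
  rewrite /node_load /assigned_load [RHS]big_mkcond; apply: eq_bigr => g _.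
  rewrite y'E eqxx andbT; case: (eqVneq g f0) => [->|gf0].
    by rewrite mulr0; case: eqP => // y1; move: f0v0; rewrite /frac_edge y1 ltxx andbF.
  by case: (node_deg1_other01 (fun g => bnd g v0) deg f0v0 gf0) => ->;
    rewrite ?mulr0 ?mulr1 ?eqxx // eq_sym oner_eq0.
have open0 : ~~ closed_node y v0 by apply/negP => /forallP/(_ f0); rewrite f0v0.
have closed0 : closed_node y' v0.
  by apply: (closed_node_leaf fsub deg f0v0); rewrite /frac_edge y'E !eqxx ltxx.
have := closed_load_close lam_gt0 fsub closed_eq y'_ge0 open0 closed0.
rewrite load0 /potential (traffic_step1_drop y f0 v0); lra.
Qed.

Lemma step1_swap_progress y0 y f0 v0 : phase1_inv y0 y -> node_deg y v0 = 1%N ->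
  frac_edge y f0 v0 -> assigned_load lam y v0 < lam f0 * y f0 v0 ->
  phase1_inv y0 (step1_swap y f0 v0) /\
  potential lam y <= potential lam (step1_swap y f0 v0).
Proof.
case=> bnd row fsub0 deg f0v0 lt_assigned; set y' := step1_swap y f0 v0.
have y'E g w : y' g w = if g == f0 then (if w == v0 then 1 else 0)
  else if (w == v0) && (y g v0 == 1) then 0 else y g w by [].
have bnd' g w : 0 <= y' g w <= 1.
  by rewrite y'E; do ![case: ifP => _]; rewrite ?lexx ?ler01 ?bnd.
have y'_ge0 g w : 0 <= y' g w by case/andP: (bnd' g w).
have fsub g w : frac_edge y' g w -> frac_edge y g w.
  by rewrite /frac_edge y'E; do ![case: ifP => _]; rewrite ?ltxx ?andbF.
split.
  split=> // [g|g w /fsub /fsub0 //]; case: (eqVneq g f0) => [->|gf0].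
    by rewrite row_step1_swap.
  apply: le_trans (row g); apply: ler_sum => w _; rewrite y'E (negbTE gf0).
  by case: ifP => _; [case/andP: (bnd g w)|].
have open0 : ~~ closed_node y v0 by apply/negP => /forallP/(_ f0); rewrite f0v0.
have closed_eq g w : closed_node y w -> y' g w = y g w.
  move=> cw; have wv0 : w != v0 by apply: contraNneq open0 => <-.
  rewrite y'E (negbTE wv0) /=; case: eqP => // ->.
  apply/esym/(frac_row_rest_eq0 (bnd f0) (row f0) _ wv0); last by move/forallP: cw.
  by case/andP: f0v0.
have closed0 : closed_node y' v0.
  by apply: (closed_node_leaf fsub deg f0v0); rewrite /frac_edge y'E !eqxx ltxx andbF.
have load0 : node_load lam y' v0 = lam f0.
  rewrite /node_load (bigD1 f0) //= y'E !eqxx mulr1 big1 ?addr0 // => g gf0.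
  rewrite y'E (negbTE gf0) eqxx /=.
  by case: (node_deg1_other01 (fun g => bnd g v0) deg f0v0 gf0) => ->;
    [by case: ifP; rewrite mulr0 | by rewrite eqxx mulr0].
have := closed_load_close lam_gt0 fsub closed_eq y'_ge0 open0 closed0.
have := traffic_step1_swap v0 bnd (row f0).
have := lam_gt0 f0; case/andP: (bnd f0 v0) => _ y_le1.
rewrite load0 /potential; nra.
Qed.

End Phase1Steps.

Section Perturbation.
Variables (R : realFieldType) (F V : finType) (lam : F -> R).
Hypothesis lam_gt0 : forall f, 0 < lam f.
Implicit Types (y : F -> V -> R) (f g : F) (v w : V).

Lemma sum_psign_to_flow v1 p fe f : path (@cross F V) (inr v1) p ->
  last (inr v1) p = inl fe -> \sum_v psign R (inr v1) p f v = (fe == f)%:R.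
Proof.
move=> cp last_p; have := is_flow_last cp; rewrite last_p /= => odd_p.
by rewrite sum_psign_flow // last_p -signr_odd -odd_p -!sum_eqE /= sub0r mulN1r opprK.
Qed.

Section Paths.
Variables (y : F -> V -> R) (v1 : V) (p1 p2 : seq (F + V)) (d : R).
Hypotheses (path1 : path (adj y) (inr v1) p1) (path2 : path (adj y) (inr v1) p2).

Lemma perturb_off_frac f v : ~~ frac_edge y f v -> perturb lam y v1 p1 p2 d f v = y f v.
Proof.
move=> nfv; have psign0 p : path (adj y) (inr v1) p -> psign R (inr v1) p f v = 0.
  by move=> pp; apply/eqP; apply: contraNT nfv => /(psign_frac_edge pp).
by rewrite /perturb !psign0 // subrr mulr0 addr0.
Qed.

Variables (fe1 fe2 : F).
Hypotheses (last1 : last (inr v1) p1 = inl fe1) (last2 : last (inr v1) p2 = inl fe2).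

Lemma perturb_row_sum f : \sum_v perturb lam y v1 p1 p2 d f v =
  \sum_v y f v + d / lam f * ((fe1 == f)%:R - (fe2 == f)%:R).
Proof.
have cross1 := sub_path (@adj_cross _ _ _ y) path1.
have cross2 := sub_path (@adj_cross _ _ _ y) path2.
rewrite big_split /= -mulr_sumr sumrB.
by rewrite (sum_psign_to_flow _ cross1 last1) (sum_psign_to_flow _ cross2 last2).
Qed.

Lemma traffic_perturb : traffic lam (perturb lam y v1 p1 p2 d) = traffic lam y.
Proof.
rewrite /traffic; under eq_bigr => f _ do rewrite perturb_row_sum mulrDr.
rewrite big_split /= -[RHS]addr0; congr (_ + _).
have -> : \sum_f lam f * (d / lam f * ((fe1 == f)%:R - (fe2 == f)%:R)) =
          \sum_f d * ((fe1 == f)%:R - (fe2 == f)%:R).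
  by apply: eq_bigr => f _; field; rewrite gt_eqF.
by rewrite -mulr_sumr sumrB !sum_eq_indicator subrr mulr0.
Qed.

End Paths.

Lemma perturb_progress y0 y v1 f1 f2 p1 p2 d : phase1_inv y0 y -> frac_acyclic y0 ->
  (forall v, node_deg y v <> 1%N) -> longest_from y v1 f1 p1 -> longest_from y v1 f2 p2 ->
  0 < d -> (forall f v, 0 <= perturb lam y v1 p1 p2 d f v <= 1) ->
  phase1_inv y0 (perturb lam y v1 p1 p2 d) /\
  potential lam y <= potential lam (perturb lam y v1 p1 p2 d).
Proof.
case=> bnd row fsub0 acyc0 deg_ne1 long1 long2 d_gt0 bnd'.
have acyc := frac_acyclic_sub fsub0 acyc0.
have [fe1 [w1 [last1 fw1 uniq1]]] := longest_from_leaf_flow acyc deg_ne1 long1.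
have [fe2 [_ [last2 _ _]]] := longest_from_leaf_flow acyc deg_ne1 long2.
have path1 : path (adj y) (inr v1) p1 by case: long1 => /andP [].
have path2 : path (adj y) (inr v1) p2 by case: long2 => /andP [].
have off := perturb_off_frac d path1 path2.
have fsub f v : frac_edge (perturb lam y v1 p1 p2 d) f v -> frac_edge y f v.
  by apply: contraTT => nfv; rewrite /frac_edge off.
have closed_eq f v : closed_node y v -> perturb lam y v1 p1 p2 d f v = y f v.
  by move/forallP/(_ f); apply: off.
split.
  split=> // [f|f v /fsub /fsub0 //].
  have [<-|ne1] := eqVneq fe1 f.
    rewrite (bigD1 w1) //= big1 ?addr0 => [|v vw1]; first by case/andP: (bnd' fe1 w1).
    have nfv : ~~ frac_edge y fe1 v by apply: contra vw1 => /uniq1 ->.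
    rewrite off //; apply: (frac_row_rest_eq0 (bnd fe1) (row fe1) _ vw1 nfv).
    by case/andP: fw1.
  rewrite (perturb_row_sum d path1 path2 last1 last2) (negbTE ne1) sub0r.
  have : 0 <= d / lam f * (fe2 == f)%:R by rewrite mulr_ge0 ?ler0n // divr_ge0 // ltW.
  by have := row f; lra.
rewrite /potential (traffic_perturb d path1 path2 last1 last2) lerD2l.
by apply: (closed_load_mono lam_gt0 fsub closed_eq) => f v; case/andP: (bnd' f v).
Qed.

Lemma phase1_reach_progress y0 y y' : frac_acyclic y0 -> phase1_inv y0 y ->
  phase1_reach lam y y' -> phase1_inv y0 y' /\ potential lam y <= potential lam y'.
Proof.
move=> acyc0 inv reach; elim: reach inv => [y1 inv1|y1 y2 y3 step _ IH inv1]; first by split.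
have [inv2 le12] : phase1_inv y0 y2 /\ potential lam y1 <= potential lam y2.
  case: step inv1 => [f v deg fv le_assigned|f v deg fv lt_assigned|
                      v1 f1 f2 p1 p2 d deg _ long1 long2 d_gt0 bnd _] inv1.
  - exact: (step1_drop_progress lam_gt0 inv1 deg fv le_assigned).
  - exact: (step1_swap_progress lam_gt0 inv1 deg fv lt_assigned).
  - exact: (perturb_progress inv1 acyc0 deg long1 long2 d_gt0 bnd).
by have [inv3 le23] := IH inv2; split=> //; apply: le_trans le12 le23.
Qed.

End Perturbation.

Section Endpoints.
Variables (R : realFieldType) (F V : finType).
Variables (lam : F -> R) (c : V -> R) (Vf : F -> {set V}) (U : {set V}).
Hypothesis lam_gt0 : forall f, 0 < lam f.
Implicit Types (x : F -> V -> R) (f : F) (v : V).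

Lemma Q2_phase1_inv x : Q2_feasible lam c Vf U x ->
  phase1_inv (fun f v => x f v / lam f) (fun f v => x f v / lam f).
Proof.
case=> x_ge0 _ x_U _ x_lam.
have row_U f : \sum_v x f v = \sum_(v in U) x f v.
  by rewrite [RHS]big_mkcond; apply: eq_bigr => v _; case: ifPn => // /x_U.
split=> // [f v|f]; last by rewrite -mulr_suml ler_pdivrMr // mul1r row_U.
rewrite divr_ge0 ?x_ge0 ?(ltW (lam_gt0 f)) //= ler_pdivrMr // mul1r.
apply: le_trans (x_lam f).
by rewrite -row_U (bigD1 v) //= lerDl sumr_ge0.
Qed.

Lemma Q2_obj_traffic x : Q2_feasible lam c Vf U x ->
  Q2_obj Vf U x = traffic lam (fun f v => x f v / lam f).
Proof.
case=> _ _ x_U x_Vf _; apply: eq_bigr => f _.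
rewrite -mulr_suml mulrCA mulfV ?gt_eqF // mulr1 big_mkcond; apply: eq_bigr => v _.
by rewrite /Uf inE; case: ifPn => // /nandP [/x_Vf|/x_U] ->.
Qed.

Lemma phase2_gain_ge0 s z gain : phase2 lam c Vf U s z gain -> 0 <= gain.
Proof.
elim: s z gain => [|f s IH] z gain /=; first by move->.
case: ifP => _; last exact: IH.
by case=> zf _ /IH; have := lam_gt0 f; lra.
Qed.

End Endpoints.

Unset Implicit Arguments.

Theorem lemma4 (R : realFieldType) (F V : finType)
  (lam : F -> R) (c : V -> R) (Vf : F -> {set V}) (U : {set V}) :
  (forall f, 0 < lam f) -> (forall v, 0 < c v) ->
  (forall f v, lam f <= c v) ->
  forall opt pi : R,
    Q2_OPT lam c Vf U opt -> MCA_run lam c Vf U pi -> opt / 2 <= pi.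
Proof.
move=> lam_gt0 _ _ opt pi [[x x_feas <-] _]
  [x0 [y [s [gain [[[x0_feas x0_max] x0_basic reach settled] [_ _ run2 ->]]]]]].
have inv0 := Q2_phase1_inv lam_gt0 x0_feas.
have [[bnd row _] grow] :=
  phase1_reach_progress lam_gt0 (Q2_basic_frac_acyclic lam_gt0 x0_basic) inv0 reach.
have := x0_max x x_feas.
have y0_ge0 f v : 0 <= x0 f v / lam f by case: inv0 => bnd0 _ _; case/andP: (bnd0 f v).
have := traffic_le_potential lam_gt0 y0_ge0.
have := traffic_le_assigned lam_gt0 bnd row settled.
have := phase2_gain_ge0 lam_gt0 run2.
rewrite (Q2_obj_traffic lam_gt0 x0_feas); rewrite (potential_no_frac lam settled) in grow.
lra.
Qed.
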